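(* Let $c_0(t)$ be an analytic function, not identically zero, and define analytic functions $c_n(t)$, $n\ge 1$, by $$c_1=\dot c_0,\qquad c_{n+1}=\dot c_n+\sum_{s=0}^{n-1}c_s c_{n-1-s}\quad(n\ge 1).$$ Let $U(t)=-c_0(t)$ and define $\sigma_m(t)$, $m\ge 1$, by $\sigma_1=-U$, $\sigma_2=-\dot U$, and $$\sigma_{m+1}=\dot\sigma_m+\sum_{k=1}^{m-1}\sigma_k\sigma_{m-k}\quad(m\ge 1).$$ Then $\sigma_m(t)=c_{m-1}(t)$ for all $m\ge 1$.
   Context: The recursion for $c_n$ is the moment recursion of the unrestricted Toda chain in the case $u_0(t)=c_0(t)$ (equivalently, boundary condition $b_{-1}\equiv 0$). The $\sigma_m$ are the conserved densities of the Korteweg–de Vries equation associated with the Schrödinger potential $U$ (with the variable $t$ playing the role of the spatial variable $x$). A dot denotes differentiation in $t$. *)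

From Stdlib Require Import Reals List.
From Coquelicot Require Import Coquelicot.
Open Scope R_scope.

Definition analytic (f : R -> R) : Prop :=
  forall x : R, exists r : R, 0 < r /\ exists a : nat -> R,
    forall y : R, Rabs (y - x) < r -> is_pseries a (y - x) (f y).

Definition sumR (l : list nat) (F : nat -> R) : R :=
  fold_right Rplus 0 (map F l).

(** Both families satisfy the same recursion after the shift [m = n + 1]:
    [sigma_1 = c_0], [sigma_2 = c_1], and substituting [k = s + 1] turns the
    convolution [sum_(k=1)^(m-1) sigma_k sigma_(m-k)] into
    [sum_(s=0)^(m-2) c_s c_(m-2-s)].  Strong induction on [m] concludes. *)

From Stdlib Require Import Reals List Arith Lia.
From Coquelicot Require Import Coquelicot.
Open Scope R_scope.

Lemma sumR_ext (l : list nat) (F G : nat -> R) :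
  (forall k, In k l -> F k = G k) -> sumR l F = sumR l G.
Proof.
  unfold sumR; induction l as [|a l IH]; intros HFG; simpl; [reflexivity|].
  rewrite (HFG a) by (left; reflexivity).
  rewrite IH by (intros k Hk; apply HFG; right; exact Hk).
  reflexivity.
Qed.

Lemma sumR_seq_S (a n : nat) (F : nat -> R) :
  sumR (seq (S a) n) F = sumR (seq a n) (fun k => F (S k)).
Proof. unfold sumR; rewrite <- seq_shift, map_map; reflexivity. Qed.

Theorem mainTheorem2 (c0 : R -> R) (c sigma : nat -> R -> R) :
  analytic c0 ->
  (exists t, c0 t <> 0) ->
  (forall t, c 0%nat t = c0 t) ->
  (forall t, c 1%nat t = Derive (c 0%nat) t) ->
  (forall (n : nat) t, (1 <= n)%nat ->
     c (S n) t = Derive (c n) t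
                 + sumR (seq 0 n) (fun s => c s t * c (n - 1 - s)%nat t)) ->
  let U := fun t => - c0 t in
  (forall t, sigma 1%nat t = - U t) ->
  (forall t, sigma 2%nat t = - Derive U t) ->
  (forall (m : nat) t, (1 <= m)%nat ->
     sigma (S m) t = Derive (sigma m) t
                     + sumR (seq 1 (m - 1)) (fun k => sigma k t * sigma (m - k)%nat t)) ->
  forall (m : nat) t, (1 <= m)%nat -> sigma m t = c (m - 1)%nat t.
Proof.
  intros _ _ Hc0 Hc1 HcS U Hs1 Hs2 HsS m.
  induction m as [m IH] using (well_founded_induction lt_wf); intros t Hm.
  destruct m as [|[|[|m]]]; [lia| | |].
  - rewrite Hs1, Hc0; unfold U; ring.
  - rewrite Hs2, Hc1; unfold U; rewrite Derive_opp, Ropp_involutive.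
    apply Derive_ext; intro s; symmetry; apply Hc0.
  - replace (S (S (S m)) - 1)%nat with (S (S m)) by lia.
    rewrite HsS, HcS by lia.
    f_equal.
    + apply Derive_ext; intro s; apply IH; lia.
    + rewrite sumR_seq_S; apply sumR_ext; intros k Hk; apply in_seq in Hk.
      rewrite (IH (S k)), (IH (S (S m) - S k)%nat) by lia.
      do 2 f_equal; lia.
Qed.
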